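(* Let $R$ be as in the standing setup. Then $a_j\ge b_j$ for all $j=0,\ldots,e-1$.
   Context: Standing setup: $k$ is a field and $R$ is a complete local domain with $k\subseteq R\subseteq k[[t]]$, residue field $k$, maximal ideal $m$, and nonzero conductor $(R:k[[t]])\neq 0$. Let $v$ be the $t$-adic valuation, $S=v(R)=\{v(r): r\in R, r\neq 0\}$, $e$ the smallest positive element of $S$, and $w_j$ the smallest element of $S$ congruent to $j\pmod e$. For a nonzero ideal $I$, $v(I)=\{v(a): a\in I, a\ne0\}$; $m^0=R$. Set $b_j=\max\{i: w_j\in v(m^i)\}$. Let $R'=\bigcup_{n\ge0}(m^n:m^n)$ be the blowup (first neighborhood ring) of $R$, a subring of $k[[t]]$; let $w'_j$ be the smallest element of $v(R')$ congruent to $j\pmod e$, and define $a_j$ by $w'_j=w_j-a_je$. *)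

(* Formal power series k[[t]] are modelled as coefficient
   functions nat -> k with the Cauchy product. *)
From HB Require Import structures.
From mathcomp Require Import all_boot all_order all_algebra.
Set Implicit Arguments. Unset Strict Implicit. Unset Printing Implicit Defensive.
Import GRing.Theory.

Local Open Scope ring_scope.

Definition ps (k : fieldType) := nat -> k.
Definition pconst (k : fieldType) (c : k) : ps k :=
  fun n => if n is 0%N then c else 0.
Definition padd (k : fieldType) (f g : ps k) : ps k := fun n => f n + g n.
Definition popp (k : fieldType) (f : ps k) : ps k := fun n => - f n.
Definition pmul (k : fieldType) (f g : ps k) : ps k :=
  fun n => \sum_(i < n.+1) f i * g (n - i)%N.

Definition is_subring (k : fieldType) (R : ps k -> Prop) : Prop :=
  [/\ (forall c : k, R (pconst c)),
      (forall f g, R f -> R g -> R (padd f g)),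
      (forall f, R f -> R (popp f)) &
      (forall f g, R f -> R g -> R (pmul f g))].

(* t-adic valuation as a relation: v(f) = n  (this forces f <> 0) *)
Definition tval (k : fieldType) (f : ps k) (n : nat) : Prop :=
  f n != 0 /\ forall i, (i < n)%N -> f i = 0.

Definition vals (k : fieldType) (P : ps k -> Prop) (s : nat) : Prop :=
  exists f, P f /\ tval f s.

(* maximal ideal m of R (kernel of R -> k, residue field k) *)
Definition maxideal (k : fieldType) (R : ps k -> Prop) (f : ps k) : Prop :=
  R f /\ f 0%N = 0.

Inductive idealprod (k : fieldType) (I J : ps k -> Prop) : ps k -> Prop :=
  | ip_mul a b : I a -> J b -> idealprod I J (pmul a b)
  | ip_add x y : idealprod I J x -> idealprod I J y -> idealprod I J (padd x y).

Fixpoint mpow (k : fieldType) (R : ps k -> Prop) (n : nat) : ps k -> Prop :=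
  match n with
  | 0%N => R
  | n'.+1 => idealprod (maxideal R) (mpow R n')
  end.

Definition colon_self (k : fieldType) (I : ps k -> Prop) (x : ps k) : Prop :=
  forall y, I y -> I (pmul x y).

Definition blowup (k : fieldType) (R : ps k -> Prop) (x : ps k) : Prop :=
  exists n, colon_self (mpow R n) x.

Definition is_least (P : nat -> Prop) (n : nat) : Prop :=
  P n /\ forall m, P m -> (n <= m)%N.
Definition is_greatest (P : nat -> Prop) (n : nat) : Prop :=
  P n /\ forall m, P m -> (m <= n)%N.

(* Take x in R with v(x) = e, and f in m^b with v(f) = w.  Since every element of
   m^b has order at least b e, the quotient y = f / x^b is a power series of order
   w - b e; we show y lies in the blowup R'.  Let c be the order of a nonzero
   element of the conductor.  Then m^n contains every series of order at least
   c + n e, so m^n is described by the finite set V_n = { s < c : s + n e is the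
   order of an element of m^n }.  Multiplication by x shows V_n is contained in
   V_(n+1), so along n = 0, b, 2b, ... the sets stabilise; once V_(n+b) = V_n,
   Gaussian elimination along orders shows m^(b+n) = x^b m^n.  Then
   y m^n = x^(-b) f m^n is contained in x^(-b) m^(b+n) = m^n, so y is in R'.
   Hence w' <= w - b e, and since w' = w mod e, we get w = w' + a e with a >= b. *)

From Pilot Require Import Defs.
From HB Require Import structures.
From mathcomp Require Import all_boot all_order all_algebra zify boolp.
Set Implicit Arguments. Unset Strict Implicit. Unset Printing Implicit Defensive.
Import GRing.Theory.
Local Open Scope ring_scope.

Lemma finset_chain_stalls (T : finType) (S : nat -> {set T}) :
  (forall i, S i \subset S i.+1) -> exists i, S i.+1 \subset S i.
Proof.
move=> incS.
have grow i : (i <= #|S i|)%N \/ exists j, S j.+1 \subset S j.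
  elim: i => [|i [le_i | stall]]; [by left | | by right].
  have [sub | nsub] := boolP (S i.+1 \subset S i); first by right; exists i.
  by left; apply: leq_ltn_trans le_i (proper_card _); rewrite properE incS.
by case: (grow #|T|.+1) => //; rewrite ltnNge max_card.
Qed.

Section PowerSeries.
Variable k : fieldType.
Implicit Types f g h : ps k.

(* Coefficient n of pmul f g only involves coefficients up to n, so the ring laws
   of pmul are inherited from {poly k} through truncations. *)
Definition ps_trunc N f : {poly k} := \poly_(i < N) f i.

Lemma coef_ps_trunc N f i : (ps_trunc N f)`_i = if (i < N)%N then f i else 0.
Proof. by rewrite coef_poly. Qed.

Lemma pmul_trunc N f g n : (n < N)%N -> pmul f g n = (ps_trunc N f * ps_trunc N g)`_n.
Proof.
move=> ltnN; rewrite coefM; apply: eq_bigr => i _.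
by rewrite !coef_ps_trunc ifT ?ifT //; move: (ltn_ord i); lia.
Qed.

Lemma coefM_eq (p p' q q' : {poly k}) n :
  (forall i, (i <= n)%N -> p`_i = p'`_i) -> (forall i, (i <= n)%N -> q`_i = q'`_i) ->
  (p * q)`_n = (p' * q')`_n.
Proof.
move=> eq_p eq_q; rewrite !coefM; apply: eq_bigr => i _.
by rewrite eq_p ?eq_q ?leq_subr // -ltnS.
Qed.

Lemma pmulC f g : pmul f g = pmul g f.
Proof. by apply: funext => n; rewrite !(pmul_trunc _ _ (ltnSn n)) mulrC. Qed.

Lemma pmulA f g h : pmul f (pmul g h) = pmul (pmul f g) h.
Proof.
have trunc_pmul p q n i : (i <= n)%N ->
    (ps_trunc n.+1 (pmul p q))`_i = (ps_trunc n.+1 p * ps_trunc n.+1 q)`_i.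
  move=> le_in; rewrite coef_ps_trunc ltnS le_in (pmul_trunc _ _ (ltnSn i)).
  by apply: coefM_eq => l le_li; rewrite !coef_ps_trunc !ifT //; lia.
apply: funext => n; rewrite !(pmul_trunc _ _ (ltnSn n)).
rewrite (coefM_eq (p' := ps_trunc n.+1 f) (q' := ps_trunc n.+1 g * ps_trunc n.+1 h)) //.
  by rewrite mulrA; apply: coefM_eq => // i le_in; exact/esym/trunc_pmul.
exact: trunc_pmul.
Qed.

Lemma pmulDr f g h : pmul f (padd g h) = padd (pmul f g) (pmul f h).
Proof.
by apply: funext => n; rewrite /pmul /padd -big_split; apply: eq_bigr => i _; rewrite mulrDr.
Qed.

Lemma pmulDl f g h : pmul (padd g h) f = padd (pmul g f) (pmul h f).
Proof. by rewrite pmulC pmulDr !(pmulC f). Qed.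

Lemma pmulNr f g : pmul f (popp g) = popp (pmul f g).
Proof. by apply: funext => n; rewrite /pmul /popp -sumrN; apply: eq_bigr => i _; rewrite mulrN. Qed.

Lemma pmul_pconst c f : pmul (pconst c) f = fun n => c * f n.
Proof.
apply: funext => n; rewrite /pmul big_ord_recl subn0 big1 ?addr0 // => i _.
by rewrite mul0r.
Qed.

Definition zero_below f m := forall i, (i < m)%N -> f i = 0.

Lemma zero_belowS f m : zero_below f m -> f m = 0 -> zero_below f m.+1.
Proof. by move=> f_low fm0 i; rewrite ltnS leq_eqVlt => /predU1P [-> | /f_low]. Qed.

Lemma zero_belowD f g m : zero_below f m -> zero_below g m -> zero_below (padd f g) m.
Proof. by move=> f_low g_low i lt_im; rewrite /padd f_low ?g_low ?addr0. Qed.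

Lemma zero_belowM f g a b : zero_below f a -> zero_below g b -> zero_below (pmul f g) (a + b)%N.
Proof.
move=> f_low g_low n lt_nab; rewrite /pmul big1 // => i _.
have [lt_ia | le_ai] := ltnP i a; first by rewrite f_low ?mul0r.
by rewrite g_low ?mulr0 //; move: (ltn_ord i); lia.
Qed.

Lemma tvalM f g a b : Defs.tval f a -> Defs.tval g b -> Defs.tval (pmul f g) (a + b)%N.
Proof.
move=> [fa f_low] [gb g_low]; split; last exact: zero_belowM.
have lt_a : (a < (a + b).+1)%N by rewrite ltnS leq_addr.
rewrite /pmul (bigD1 (Ordinal lt_a)) //= big1 ?addr0; first by rewrite addKn mulf_neq0.
move=> [i lt_i] /= ne_ia.
have [lt_ia | le_ai] := ltnP i a; first by rewrite f_low ?mul0r.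
by rewrite g_low ?mulr0 //; move: ne_ia; rewrite -val_eqE /=; lia.
Qed.

Lemma tval_exists f n : f n != 0 -> exists2 m, Defs.tval f m & (m <= n)%N.
Proof.
move=> fn0; have f_nz : exists i, f i != 0 by exists n.
case: (ex_minnP f_nz) => m fm0 min_m; exists m; last exact: min_m.
split=> // i lt_im; apply/eqP; apply: contraTT lt_im => /min_m; by rewrite -leqNgt.
Qed.

Lemma pmulI a d f g : Defs.tval a d -> pmul a f = pmul a g -> f = g.
Proof.
move=> a_d eq_afg; apply: funext => i; apply/eqP; rewrite -subr_eq0.
apply: contraT => /(tval_exists (f := padd f (popp g))) [u fg_u _].
have [] := tvalM a_d fg_u; rewrite pmulDr pmulNr eq_afg.
by rewrite /padd /popp subrr eqxx.
Qed.

Section Division.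
Variables (g h : ps k) (d : nat).
Hypothesis g_d : Defs.tval g d.
Hypothesis h_low : zero_below h d.

(* Long division: the n-th quotient coefficient is determined by the previous ones
   through [\sum_(l <= n) g (d + l) * q (n - l) = h (n + d)]. *)
Definition quot_next (s : seq k) (n : nat) : k :=
  (h (n + d)%N - \sum_(l < n) g (d + l.+1)%N * nth 0 s (n - l.+1)) / g d.

Fixpoint quot_seq n : seq k :=
  if n is n'.+1 then rcons (quot_seq n') (quot_next (quot_seq n') n') else [::].

Definition quot n := nth 0 (quot_seq n.+1) n.

Lemma size_quot_seq n : size (quot_seq n) = n.
Proof. by elim: n => //= n IH; rewrite size_rcons IH. Qed.

Lemma nth_quot_seq n i : (i < n)%N -> nth 0 (quot_seq n) i = quot i.
Proof.
elim: n => // n IH; rewrite ltnS leq_eqVlt => /predU1P [-> | lt_in] //=.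
by rewrite nth_rcons size_quot_seq lt_in IH.
Qed.

Lemma quot_recurrence n : \sum_(l < n.+1) g (d + l)%N * quot (n - l) = h (n + d)%N.
Proof.
rewrite big_ord_recl subn0 addn0.
rewrite (eq_bigr (fun l : 'I_n => g (d + l.+1)%N * nth 0 (quot_seq n) (n - l.+1))); last first.
  by move=> i _; rewrite nth_quot_seq //; move: (ltn_ord i); lia.
rewrite {1}/quot /= nth_rcons size_quot_seq ltnn eqxx /quot_next.
by case: g_d => gd0 _; rewrite mulrC divfK // subrK.
Qed.

Lemma pmul_quot : pmul g quot = h.
Proof.
apply: funext => m; have [lt_md | le_dm] := ltnP m d.
  rewrite h_low // /pmul big1 // => i _.
  by case: g_d => _ ->; rewrite ?mul0r //; move: (ltn_ord i); lia.
rewrite -(subnK le_dm) -quot_recurrence /pmul; set n := (m - d)%N.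
have -> : (n + d).+1 = (d + n.+1)%N by lia.
rewrite big_split_ord /= big1 ?add0r => [|i _]; last by case: g_d => _ ->; rewrite ?mul0r.
by apply: eq_bigr => i _; congr (_ * quot _); lia.
Qed.

End Division.

Lemma pdivP g h d m :
  Defs.tval g d -> zero_below h (d + m)%N -> exists2 q, pmul g q = h & zero_below q m.
Proof.
move=> g_d h_low; have h_low_d : zero_below h d by move=> i /ltn_addr /h_low.
exists (quot g h d); first exact: pmul_quot.
move=> i lt_im; apply/eqP; apply: contraT => /tval_exists [u q_u le_ui].
have [] := tvalM g_d q_u; rewrite pmul_quot // h_low ?eqxx //.
by rewrite ltn_add2l (leq_ltn_trans le_ui).
Qed.

Lemma pdiv_tval g h d m :
  Defs.tval g d -> Defs.tval h (d + m)%N -> exists2 q, pmul g q = h & Defs.tval q m.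
Proof.
move=> g_d [hdm0 h_low]; have [q gq q_low] := pdivP g_d h_low.
exists q => //; split=> //; apply: contra hdm0 => /eqP qm0.
by rewrite -gq (zero_belowM g_d.2 (zero_belowS q_low qm0)) ?addnS.
Qed.

Definition ps_subspace (I : ps k -> Prop) :=
  (forall f g, I f -> I g -> I (padd f g)) /\ (forall c f, I f -> I (pmul (pconst c) f)).

(* Gaussian elimination along the orders of the elements of I'. *)
Lemma ps_subspace_sub (I I' : ps k -> Prop) C :
  ps_subspace I -> ps_subspace I' -> (forall f, I f -> I' f) ->
  (forall f s, I' f -> Defs.tval f s -> (s < C)%N -> exists2 g, I g & Defs.tval g s) ->
  (forall f, I' f -> zero_below f C -> I f) ->
  forall f, I' f -> I f.
Proof.
move=> [ID IZ] [I'D I'Z] sub_II' I_orders I_high.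
suff low_in_I n f : I' f -> zero_below f (C - n) -> I f.
  by move=> f I'f; apply: (low_in_I C) => // i; rewrite subnn.
elim: n f => [|n IH] f I'f f_low; first by rewrite subn0 in f_low; apply: I_high.
have [le_Cn | lt_nC] := leqP C n; first by apply: IH => // i lt_i; lia.
have eq_Cn : (C - n = (C - n.+1).+1)%N by lia.
have lt_sC : (C - n.+1 < C)%N by lia.
set s := (C - n.+1)%N in f_low eq_Cn lt_sC.
have [fs0 | fs_nz] := eqVneq (f s) 0.
  by apply: IH; rewrite // eq_Cn; apply: zero_belowS.
have [g Ig [gs_nz g_low]] := I_orders f _ I'f (conj fs_nz f_low) lt_sC.
pose c := f s / g s.
have I_rest : I (padd f (pmul (pconst (- c)) g)).
  apply: IH; first by apply: I'D => //; apply/I'Z/sub_II'.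
  rewrite eq_Cn pmul_pconst; apply: zero_belowS => [i lt_i|].
    by rewrite /padd f_low // g_low // mulr0 addr0.
  by rewrite /padd /c mulNr divfK // subrr.
have -> : f = padd (padd f (pmul (pconst (- c)) g)) (pmul (pconst c) g).
  by apply: funext => i; rewrite !pmul_pconst /padd mulNr subrK.
by apply: ID => //; apply: IZ.
Qed.

End PowerSeries.

Section MaximalIdealPowers.
Variables (k : fieldType) (R : ps k -> Prop).
Hypothesis R_subring : is_subring R.
Implicit Types f g h : ps k.

Lemma mpowD n f g : mpow R n f -> mpow R n g -> mpow R n (padd f g).
Proof. by case: n => [|n] /=; [case: R_subring => _ RD _ _; apply: RD | apply: ip_add]. Qed.

Lemma maxidealMl r a : R r -> maxideal R a -> maxideal R (pmul r a).
Proof.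
case: R_subring => _ _ _ RM r_in [a_in a0]; split; first exact: RM.
by rewrite /pmul big_ord1 subnn a0 mulr0.
Qed.

Lemma mpowMl n r f : R r -> mpow R n f -> mpow R n (pmul r f).
Proof.
case: n => [|n] r_in /=; first by case: R_subring => _ _ _ RM; apply: RM.
elim=> [a g a_m g_n | g1 g2 _ IH1 _ IH2]; last by rewrite pmulDr; apply: ip_add.
by rewrite pmulA; apply: ip_mul => //; apply: maxidealMl.
Qed.

Lemma mpow_subspace n : ps_subspace (mpow R n).
Proof. by split=> [|c f]; [apply: mpowD | apply: mpowMl; case: R_subring]. Qed.

Lemma mpowM a b f g : mpow R a f -> mpow R b g -> mpow R (a + b) (pmul f g).
Proof.
elim: a f => [|a IH] f f_in g_in; first exact: mpowMl.
rewrite addSn /=; elim: f_in => [p q p_m q_a | f1 f2 _ IH1 _ IH2].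
  by rewrite -pmulA; apply: ip_mul => //; apply: IH.
by rewrite pmulDl; apply: ip_add.
Qed.

Variable e : nat.
Hypothesis e_min : forall s, vals R s -> (0 < s)%N -> (e <= s)%N.

Lemma maxideal_zero_below a : maxideal R a -> zero_below a e.
Proof.
move=> [a_in a0] i lt_ie; apply/eqP; apply: contraT => /tval_exists [u a_u le_ui].
case: u a_u le_ui => [[a00 _] _ | u a_u le_ui]; first by rewrite a0 eqxx in a00.
by have := e_min (ex_intro _ a (conj a_in a_u)) (ltn0Sn u); lia.
Qed.

Lemma mpow_zero_below n f : mpow R n f -> zero_below f (n * e)%N.
Proof.
elim: n f => [|n IH] f /=; first by move=> _ i; rewrite mul0n.
elim=> [a g a_m g_n | f1 f2 _ IH1 _ IH2]; last exact: zero_belowD.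
by rewrite mulSn; apply: zero_belowM; [apply: maxideal_zero_below | apply: IH].
Qed.

Variable x : ps k.
Hypotheses (x_in : R x) (x_e : Defs.tval x e) (e_gt0 : (0 < e)%N).
Variables (z : ps k) (c : nat).
Hypotheses (z_c : Defs.tval z c) (z_conductor : forall y, R (pmul z y)).

Lemma maxideal_x : maxideal R x.
Proof. by split=> //; apply: x_e.2. Qed.

Lemma conductor_sub h : zero_below h c -> R h.
Proof. by rewrite -[c]addn0 => /(pdivP z_c) [q <- _]. Qed.

Lemma mpow_of_zero_below n h : zero_below h (c + n * e)%N -> mpow R n h.
Proof.
elim: n h => [|n IH] h; first by rewrite mul0n addn0; apply: conductor_sub.
rewrite mulSn addnCA => /(pdivP x_e) [q <- q_low] /=.
by apply: ip_mul; [apply: maxideal_x | apply: IH].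
Qed.

Definition xpow b := iter b (pmul x) (pconst 1).

Lemma tval_xpow b : Defs.tval (xpow b) (b * e)%N.
Proof.
elim: b => [|b IH] /=; last by rewrite mulSn; apply: tvalM.
by split=> [|i]; rewrite ?oner_neq0 // mul0n.
Qed.

Lemma mpow_xpow b : mpow R b (xpow b).
Proof.
elim: b => [|b IH] /=; first by case: R_subring.
by apply: ip_mul; [apply: maxideal_x | apply: IH].
Qed.

Definition mpow_order n s := exists2 f, mpow R n f & Defs.tval f (s + n * e)%N.

Lemma mpow_order_add m n s : mpow_order n s -> mpow_order (m + n) s.
Proof.
move=> [f f_n f_ord]; exists (pmul (xpow m) f); first exact: mpowM (mpow_xpow m) f_n.
by rewrite mulnDl addnCA; apply: tvalM (tval_xpow m) f_ord.
Qed.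

Lemma mpow_order_stable b :
  exists n, forall s, (s < c)%N -> mpow_order (b + n) s -> mpow_order n s.
Proof.
pose S i := [set s : 'I_c | `[< mpow_order (i * b) s >]].
have [i stall] : exists i, S i.+1 \subset S i.
  apply: finset_chain_stalls => i; apply/subsetP => s.
  by rewrite !inE mulSn => /asboolP /(mpow_order_add b) /asboolP.
exists (i * b)%N => s lt_sc ord_s; move/subsetP/(_ (Ordinal lt_sc)): stall.
by rewrite !inE mulSn => /(_ (introT (asboolP _) ord_s)) /asboolP.
Qed.

Lemma mpow_sub_xpowM b n :
  (forall s, (s < c)%N -> mpow_order (b + n) s -> mpow_order n s) ->
  forall h, mpow R (b + n) h -> exists2 g, mpow R n g & h = pmul (xpow b) g.
Proof.
move=> stable; pose I h := exists2 g, mpow R n g & h = pmul (xpow b) g.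
have eq_bne : ((b + n) * e = b * e + n * e)%N by rewrite mulnDl.
apply: (@ps_subspace_sub _ I (mpow R (b + n)) (c + (b + n) * e)).
- split=> [_ _ [g1 g1_n ->] [g2 g2_n ->] | a _ [g g_n ->]].
    by exists (padd g1 g2); [apply: mpowD | rewrite pmulDr].
  exists (pmul (pconst a) g); first by apply: mpowMl; case: R_subring.
  by rewrite !pmulA (pmulC (pconst a)).
- exact: mpow_subspace.
- by move=> _ [g g_n ->]; apply: mpowM (mpow_xpow b) g_n.
- move=> h s h_in h_s lt_s.
  have le_s : ((b + n) * e <= s)%N.
    rewrite leqNgt; apply/negP => /(mpow_zero_below h_in) hs0.
    by move: h_s.1; rewrite hs0 eqxx.
  have h_ord : mpow_order (b + n) (s - (b + n) * e) by exists h; rewrite // subnK.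
  have [|g g_n g_ord] := stable _ _ h_ord; first by lia.
  exists (pmul (xpow b) g); first by exists g.
  have -> : s = (b * e + (s - (b + n) * e + n * e))%N by lia.
  exact: tvalM (tval_xpow b) g_ord.
- move=> h _; rewrite mulnDl addnCA => /(pdivP (tval_xpow b)) [g <- g_low].
  by exists g => //; apply: mpow_of_zero_below.
Qed.

Lemma blowup_of_mpow b f w : mpow R b f -> Defs.tval f w ->
  (b * e <= w)%N /\ exists2 y, blowup R y & Defs.tval y (w - b * e)%N.
Proof.
move=> f_b f_w; have le_bw : (b * e <= w)%N.
  rewrite leqNgt; apply/negP => /(mpow_zero_below f_b) fw0.
  by move: f_w.1; rewrite fw0 eqxx.
split=> //; rewrite -(subnKC le_bw) in f_w.
have [y xy y_ord] := pdiv_tval (tval_xpow b) f_w; exists y => //.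
have [n stable] := mpow_order_stable b; exists n => g g_n.
have [g' g'_n] := mpow_sub_xpowM stable (mpowM f_b g_n).
by rewrite -xy -pmulA => /(pmulI (tval_xpow b)) ->.
Qed.

End MaximalIdealPowers.

Local Close Scope ring_scope.

Theorem mainTheorem7 (k : fieldType) (R : ps k -> Prop)
  (hR : is_subring R)
  (* R is local with residue field k: elements with nonzero constant term are units of R *)
  (hloc : forall f, R f -> f 0%N != 0%R ->
            exists g, R g /\ forall n, pmul f g n = pconst 1%R n)
  (* nonzero conductor (R : k[[t]]) *)
  (hcond : exists x : ps k, (exists n, x n != 0%R) /\ forall y, R (pmul x y))
  (e : nat) (he : is_least (fun s => vals R s /\ (0 < s)%N) e)
  (j : nat) (hj : (j < e)%N)
  (w : nat) (hw : is_least (fun s => vals R s /\ s = j %[mod e]) w)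
  (w' : nat) (hw' : is_least (fun s => vals (blowup R) s /\ s = j %[mod e]) w')
  (b : nat) (hb : is_greatest (fun i => vals (mpow R i) w) b) :
  exists a : nat, w' + a * e = w /\ (b <= a)%N.
Proof.
have [[[x [x_in x_e]] e_gt0] e_min] := he.
have [z [[n0 zn0] z_conductor]] := hcond.
have [c z_c _] := tval_exists zn0.
have [[f [f_b f_w]] _] := hb.
have [le_bw [y y_blowup y_ord]] :=
  blowup_of_mpow hR (fun s vs s_gt0 => e_min s (conj vs s_gt0))
    x_in x_e e_gt0 z_c z_conductor f_b f_w.
have y_mod : w - b * e = j %[mod e] by rewrite -(modnMDl b) subnKC // hw.1.2.
have le_w'y : w' <= w - b * e by apply: hw'.2; split=> //; exists y.
have dvd_e : e %| w - w' by rewrite -eqn_mod_dvd ?hw'.1.2 ?hw.1.2 //; lia.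
exists ((w - w') %/ e); split; first by rewrite divnK // subnKC //; lia.
by rewrite -(leq_pmul2r e_gt0) divnK //; lia.
Qed.
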